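(* Let $k \ge 1$ and $\epsilon > 0$. There does not exist a single-round asymmetric communication protocol with which, given any probability distribution $P$ with entropy $H$ over a set of $n$ possible messages, the server sends $O(n^{1/k - \epsilon})$ bits in the worst case and the client sends at most $kH + o(\log n)$ bits in the expected case (expectation over the client's message drawn from $P$).
   Context: Asymmetric communication problem: a server knows a probability distribution $P$ over a set of $n$ possible messages; a single client holds one message drawn according to $P$ and does not know $P$. The server must learn the client's message. A single-round protocol is one in which the server sends one transmission (which may depend on $P$) to the client, and the client then sends one transmission (depending on the server's transmission and its own message) from which the server must be able to recover the client's message. The entropy is $H = -\sum_x P(x)\log_2 P(x)$. Asymptotic notation $O(\cdot)$, $o(\cdot)$ is with respect to $n \to \infty$, with $k$ and $\epsilon$ fixed. *)

From Stdlib Require Import Reals List.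
Open Scope R_scope.

Fixpoint sumn_R (n : nat) (f : nat -> R) : R :=
  match n with
  | O => 0
  | S m => sumn_R m f + f m
  end.

Definition is_distr (n : nat) (P : nat -> R) : Prop :=
  (forall x, (x < n)%nat -> 0 <= P x) /\
  sumn_R n P = 1.

Definition log2 (x : R) : R := ln x / ln 2.

(* Shannon entropy in bits, with the convention 0 log 0 = 0. *)
Definition entropy (n : nat) (P : nat -> R) : R :=
  - sumn_R n (fun x => if Req_EM_T (P x) 0 then 0 else P x * log2 (P x)).

(* A single-round protocol, for each number n of messages:
   - server n P   : the server's transmission (bit string), depending on P;
   - client n s x : the client's transmission given the server's transmission s
                    and its own message x;
   - decode n P t : the server's reconstruction of x from P (which determines
                    its own transmission) and the client's transmission t. *)
Record protocol : Type := {
  server : nat -> (nat -> R) -> list bool;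
  client : nat -> list bool -> nat -> list bool;
  decode : nat -> (nat -> R) -> list bool -> nat
}.

Definition correct (p : protocol) : Prop :=
  forall n P, is_distr n P -> forall x, (x < n)%nat -> 0 < P x ->
    decode p n P (client p n (server p n P) x) = x.

Definition client_expected_bits (p : protocol) (n : nat) (P : nat -> R) : R :=
  sumn_R n (fun x => P x * INR (length (client p n (server p n P) x))).

Definition little_o_log (g : nat -> R) : Prop :=
  forall d, 0 < d -> exists N, forall n, (N <= n)%nat -> Rabs (g n) <= d * ln (INR n).

From Stdlib Require Import Reals List ZArith Lia Lra.
From mathcomp Require all_boot all_order all_algebra zify.
Open Scope R_scope.

(* Let A range over the sets of a = 2^E2 of the n = 2^E1 messages, and let P_A put mass 1 - eta
   uniformly on A and eta uniformly on the other messages, so that H(P_A) <= E2 + eta E1 + 1.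
   Every message then has positive probability, so for each server transmission s the client's
   code x |-> c_s(x) is injective on all n messages, whence sum_x 2^-|c_s(x)| <= 2 E1 + 1.
   If the client sends few bits on average, sum_(x in A) |c_s(x)| <= K for every A, i.e.
   2^K prod_(x in A) 2^-|c_s(x)| >= 1.  Summing over the ordered a-tuples of distinct messages and
   over the at most 2^(M+1) server transmissions of length <= M gives
   (n - a)^a <= n (n-1) ... (n-a+1) <= 2^(K+M+1) (2 E1 + 1)^a.
   With M <= c n^(1/k - eps) <= c a and K ~ a (k (E2 + eta E1) + o(E1)), this yields
   E1 <= k E2 + (k eta + o(1)) E1 + c + O(log E1), which fails for E1 = k r v, E2 = (r - 1) v,
   r eps >= 1, eta = 1/(8 k r) and v large. *)

Fixpoint sum_pred (n : nat) (A : nat -> bool) (h : nat -> nat) : nat :=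
  match n with
  | O => O
  | S m => (sum_pred m A h + (if A m then h m else O))%nat
  end.

Definition count_pred (n : nat) (A : nat -> bool) : nat := sum_pred n A (fun _ => 1%nat).

Module InjectiveCodes.
Import all_boot all_order all_algebra zify.
Import Order.TTheory GRing.Theory Num.Theory.
Local Open Scope ring_scope.

(* The binary numeral 1 b_(l-1) ... b_0 of [:: b_0; ...; b_(l-1)]; the leading 1 makes it injective. *)
Definition bits_to_nat (s : seq bool) : nat :=
  foldr (fun (b : bool) m => (b + m.*2)%N) 1%N s.

Lemma bits_to_nat_gt0 s : (0 < bits_to_nat s)%N.
Proof. by elim: s => //= b s IH; rewrite addn_gt0 double_gt0 IH orbT. Qed.

Lemma bits_to_nat_inj : injective bits_to_nat.
Proof.
have half_code b s : (bits_to_nat (b :: s))./2 = bits_to_nat s by exact: half_bit_double.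
elim=> [|b s IH] [|b' s'] // E.
- by have := bits_to_nat_gt0 s'; rewrite -(half_code b') -E.
- by have := bits_to_nat_gt0 s; rewrite -(half_code b) E.
have -> : b = b' by have := congr1 odd E; rewrite /= !oddD !odd_double !addbF !oddb.
by rewrite (IH s') // -(half_code b) E half_code.
Qed.

Lemma bits_to_nat_lt s : (bits_to_nat s < 2 ^ (size s).+1)%N.
Proof. by elim: s => //= b s IH; rewrite expnS; case: b => /=; lia. Qed.

Lemma size_uniq_bitstrings m (S : seq (seq bool)) :
  uniq S -> {in S, forall s, size s <= m}%N -> (size S <= 2 ^ m.+1)%N.
Proof.
move=> uS Sm; rewrite -(size_map bits_to_nat) -(size_iota 0 (2 ^ m.+1)).
apply: uniq_leq_size; first by rewrite (map_inj_uniq bits_to_nat_inj).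
move=> y /mapP [s sS ->]; rewrite mem_iota add0n.
by apply: leq_trans (bits_to_nat_lt s) _; rewrite leq_exp2l // ltnS Sm.
Qed.

Lemma card_bitstrings_of_size (T : finType) (f : T -> seq bool) l :
  injective f -> (#|[pred x | size (f x) == l]| <= 2 ^ l.+1)%N.
Proof.
move=> finj; rewrite cardE -(size_map f).
apply: size_uniq_bitstrings; first by rewrite (map_inj_uniq finj) enum_uniq.
by move=> y /mapP [x]; rewrite mem_enum inE => /eqP <- ->.
Qed.

Lemma sum_exp2_size_le (F : numFieldType) (T : finType) (f : T -> seq bool) L :
  injective f -> (#|T| <= 2 ^ L)%N ->
  \sum_x (2 ^- size (f x) : F) <= (2 * L + 1)%:R.
Proof.
(* At most 2^(l+1) codewords have length l < L; the longer ones weigh at most 2^-L each. *)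
move=> finj cardT.
have split_size x :
    (2 ^- size (f x) : F) <= 2 ^- L + \sum_(l < L | size (f x) == l) 2 ^- l.
  have [lt_xL|le_Lx] := ltnP (size (f x)) L.
    by rewrite (big_pred1 (Ordinal lt_xL)) /= ?lerDr ?invr_ge0 ?exprn_ge0.
  rewrite -[X in X <= _]addr0 lerD ?sumr_ge0 // => [|l _]; last by rewrite invr_ge0 exprn_ge0.
  by rewrite -!exprVn ler_wiXn2l // ?invr_ge0 ?invf_le1 ?ler1n.
apply: le_trans (ler_sum _ (fun x _ => split_size x)) _.
rewrite big_split /= sumr_const (exchange_big_dep xpredT) //= natrD addrC lerD //.
  have -> : (2 * L)%:R = \sum_(l < L) (2%:R : F).
    by rewrite sumr_const card_ord natrM mulr_natr.
  apply: ler_sum => l _.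
  rewrite sumr_const -[_ *+ _]mulr_natr mulrC ler_pdivrMr ?exprn_gt0 //.
  by rewrite -natrX -natrM ler_nat -expnS card_bitstrings_of_size.
by rewrite -[_ *+ _]mulr_natr mulrC ler_pdivrMr ?exprn_gt0 // mul1r -natrX ler_nat.
Qed.

Section InjectiveTuples.

Variables (T : finType) (a L M K : nat).
Variables (srv : {ffun 'I_a -> T} -> seq bool) (cl : seq bool -> T -> seq bool).
Hypothesis card_T : (#|T| <= 2 ^ L)%N.
Hypothesis size_srv : forall t : {ffun 'I_a -> T}, injective t -> (size (srv t) <= M)%N.
Hypothesis cl_inj : forall t : {ffun 'I_a -> T}, injective t -> injective (cl (srv t)).
Hypothesis sum_size_cl :
  forall t : {ffun 'I_a -> T}, injective t -> (\sum_i size (cl (srv t) (t i)) <= K)%N.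

Let weight s x : rat := 2 ^- size (cl s x).

Let weight_ge0 s x : 0 <= weight s x.
Proof. by rewrite invr_ge0 exprn_ge0. Qed.

Let inj_tuples := [set t : {ffun 'I_a -> T} | injectiveb t].

Let msgs := undup [seq srv t | t in inj_tuples].

Let msgsP s :
  reflect (exists2 t : {ffun 'I_a -> T}, injective t & s = srv t) (s \in msgs).
Proof.
rewrite mem_undup; apply: (iffP imageP) => [[t]|[t tinj ->]].
  by rewrite inE => /injectiveP; exists t.
by exists t; rewrite // inE; apply/injectiveP.
Qed.

Let size_msgs : (size msgs <= 2 ^ M.+1)%N.
Proof.
apply: size_uniq_bitstrings; first exact: undup_uniq.
by move=> _ /msgsP [t tinj ->]; exact: size_srv.
Qed.

Let prod_weight_ge (t : {ffun 'I_a -> T}) :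
  injective t -> 2 ^- K <= \prod_i weight (srv t) (t i).
Proof.
move=> tinj; rewrite /weight prodfV prodrXr lef_pV2 ?qualifE /= ?exprn_gt0 //.
by rewrite ler_eXn2l ?ltr1n // sum_size_cl.
Qed.

Let sum_prod_weight_le s : s \in msgs ->
  \sum_(t : {ffun 'I_a -> T}) \prod_i weight s (t i) <= (2 * L + 1)%:R ^+ a.
Proof.
case/msgsP=> t tinj ->.
rewrite -(bigA_distr_bigA (fun (_ : 'I_a) (x : T) => weight (srv t) x)) /=.
rewrite prodr_const card_ord; apply: lerXn2r; rewrite ?qualifE /= ?ler0n ?sumr_ge0 //.
by rewrite /weight; exact: sum_exp2_size_le (cl_inj _ tinj) card_T.
Qed.

Lemma ffact_card_le : (#|T| ^_ a <= 2 ^ (K + M.+1) * (2 * L + 1) ^ a)%N.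
Proof.
have covered t : (if t \in inj_tuples then 1 else 0 : rat)
    <= 2 ^+ K * \sum_(s <- msgs) \prod_i weight s (t i).
  have [tinj|_] := boolP (t \in inj_tuples); last first.
    by rewrite mulr_ge0 ?exprn_ge0 ?sumr_ge0 // => s _; apply: prodr_ge0.
  have tinj' : injective t by move: tinj; rewrite inE => /injectiveP.
  have srv_t : srv t \in msgs by apply/msgsP; exists t.
  rewrite -ler_pdivrMl ?exprn_gt0 // mulr1 (bigD1_seq _ srv_t (undup_uniq _)) /=.
  apply: le_trans (prod_weight_ge _ tinj') _; rewrite lerDl.
  by apply: sumr_ge0 => s _; apply: prodr_ge0.
rewrite -(ler_nat rat) -[a in X in X <= _]card_ord -card_inj_ffuns -sum1_card.
rewrite natr_sum big_mkcond /=; apply: le_trans (ler_sum _ (fun t _ => covered t)) _.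
rewrite -big_distrr exchange_big /= expnD -mulnA natrM natrX ler_wpM2l ?exprn_ge0 //.
rewrite big_seq; apply: le_trans (ler_sum _ sum_prod_weight_le) _.
rewrite -big_seq big_const_seq count_predT iter_addr_0 -[_ *+ size msgs]mulr_natr.
by rewrite mulrC -natrX natrM; apply: ler_wpM2r; rewrite ?ler0n // ler_nat size_msgs.
Qed.

End InjectiveTuples.

Lemma expn_subn_le_ffact n a : ((n - a) ^ a <= n ^_ a)%N.
Proof.
rewrite ffact_prod -[X in (_ ^ X <= _)%N](card_ord a) -prod_nat_const.
by apply: leq_prod => i _; rewrite leq_sub2l // ltnW.
Qed.

Lemma sum_predE n A h : sum_pred n A h = (\sum_(x < n | A x) h x)%N.
Proof.
elim: n => [|n IH]; first by rewrite big_ord0.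
by rewrite /= [RHS]big_mkcond big_ord_recr /= -big_mkcond IH.
Qed.

Definition tuple_support {n a} (t : {ffun 'I_a -> 'I_n}) (x : nat) : bool :=
  [exists i, val (t i) == x].

Lemma sum_pred_tuple_support n a (t : {ffun 'I_a -> 'I_n}) h :
  injective t -> sum_pred n (tuple_support t) h = (\sum_i h (t i))%N.
Proof.
move=> tinj; rewrite sum_predE (eq_bigl [in [set t i | i : 'I_a]]) => [|x].
  by rewrite big_imset //= => i j _ _; exact: tinj.
by apply/existsP/imsetP => [[i /eqP/val_inj <-]|[i _ ->]]; exists i.
Qed.

Lemma expn_pow m e : Nat.pow m e = (m ^ e)%N.
Proof. by elim: e => // e IH; rewrite expnS /= IH. Qed.

Lemma size_length (X : Type) (s : seq X) : size s = length s.
Proof. by elim: s => //= x s ->. Qed.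

Lemma subset_codes_bound (n a L M K : nat) (srv : (nat -> bool) -> list bool)
    (cl : list bool -> nat -> list bool) :
  (n <= Nat.pow 2 L)%coq_nat ->
  (forall A, count_pred n A = a -> (length (srv A) <= M)%coq_nat) ->
  (forall A, count_pred n A = a -> forall x y, (x < n)%coq_nat -> (y < n)%coq_nat ->
     cl (srv A) x = cl (srv A) y -> x = y) ->
  (forall A, count_pred n A = a ->
     (sum_pred n A (fun x => length (cl (srv A) x)) <= K)%coq_nat) ->
  (Nat.pow (n - a) a <= Nat.pow 2 (K + M.+1) * Nat.pow (2 * L + 1) a)%coq_nat.
Proof.
rewrite !expn_pow => /ssrnat.leP card_n size_srv cl_inj sum_size_cl; apply/ssrnat.leP.
apply: leq_trans (expn_subn_le_ffact n a) _; rewrite -[n in (n ^_ a <= _)%N]card_ord.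
have count_t (t : {ffun 'I_a -> 'I_n}) :
  injective t -> count_pred n (tuple_support t) = a.
  by move=> tinj; rewrite /count_pred sum_pred_tuple_support // sum1_card card_ord.
apply: (@ffact_card_le _ _ _ _ _ (fun t => srv (tuple_support t)) (fun s x => cl s x)).
- by rewrite card_ord.
- by move=> t tinj; rewrite size_length; apply/ssrnat.leP/size_srv/count_t.
- move=> t tinj x y Exy.
  by apply/val_inj/(cl_inj _ (count_t _ tinj)) => //; apply/ssrnat.ltP; exact: ltn_ord.
move=> t tinj; under eq_bigr do rewrite size_length.
rewrite -(@sum_pred_tuple_support n a t (fun x => length (cl _ x))) //.
by apply/ssrnat.leP/sum_size_cl/count_t.
Qed.

End InjectiveCodes.

Lemma ln_le_sub1 x : 0 < x -> ln x <= x - 1.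
Proof.
intros Hx. pose proof (exp_ineq1_le (ln x)) as H. rewrite exp_ln in H by exact Hx. lra.
Qed.

Lemma ln_le x y : 0 < x -> x <= y -> ln x <= ln y.
Proof. intros Hx [Hxy | ->]; [left; apply ln_increasing |]; lra. Qed.

Lemma ln2_pos : 0 < ln 2.
Proof. pose proof ln_lt_2. lra. Qed.

Lemma log2_le x y : 0 < x -> x <= y -> log2 x <= log2 y.
Proof.
intros Hx Hxy. unfold log2, Rdiv. apply Rmult_le_compat_r.
- left. apply Rinv_0_lt_compat, ln2_pos.
- now apply ln_le.
Qed.

Lemma log2_mult x y : 0 < x -> 0 < y -> log2 (x * y) = log2 x + log2 y.
Proof.
intros Hx Hy. unfold log2. rewrite ln_mult by assumption.
field. apply Rgt_not_eq, ln2_pos.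
Qed.

Lemma log2_div x y : 0 < x -> 0 < y -> log2 (x / y) = log2 x - log2 y.
Proof.
intros Hx Hy. unfold Rdiv. rewrite log2_mult by (try apply Rinv_0_lt_compat; assumption).
unfold log2. rewrite ln_Rinv by assumption. field. apply Rgt_not_eq, ln2_pos.
Qed.

Lemma log2_pow x e : 0 < x -> log2 (x ^ e) = INR e * log2 x.
Proof.
intros Hx. unfold log2. rewrite ln_pow by assumption.
field. apply Rgt_not_eq, ln2_pos.
Qed.

Lemma log2_1 : log2 1 = 0.
Proof. unfold log2. rewrite ln_1. field. apply Rgt_not_eq, ln2_pos. Qed.

Lemma log2_2 : log2 2 = 1.
Proof. unfold log2. field. apply Rgt_not_eq, ln2_pos. Qed.

Lemma INR_pow2 e : INR (2 ^ e) = 2 ^ e.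
Proof. rewrite pow_INR. reflexivity. Qed.

Lemma log2_INR_pow2 e : log2 (INR (2 ^ e)) = INR e.
Proof. rewrite INR_pow2, log2_pow, log2_2 by lra. ring. Qed.

Lemma ln_le_log2 x : 1 <= x -> ln x <= log2 x.
Proof.
intros Hx. pose proof (ln_le 1 x ltac:(lra) Hx) as H. rewrite ln_1 in H.
pose proof (ln_le_sub1 2 ltac:(lra)). pose proof ln2_pos.
unfold log2. apply Rmult_le_reg_r with (ln 2); [lra |].
replace (ln x / ln 2 * ln 2) with (ln x) by (field; lra). nra.
Qed.

Lemma log2_le_twice x : 0 < x -> log2 x <= 2 * x.
Proof.
intros Hx. pose proof (ln_le_sub1 x Hx). pose proof ln_lt_2. pose proof ln2_pos.
unfold log2. apply Rmult_le_reg_r with (ln 2); [lra |].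
replace (ln x / ln 2 * ln 2) with (ln x) by (field; lra).
destruct (Rle_or_lt 0 (ln x)); nra.
Qed.

Lemma binary_entropy_le1 eta : 0 < eta < 1 ->
  - ((1 - eta) * log2 (1 - eta)) - eta * log2 eta <= 1.
Proof.
intros Heta.
(* Gibbs' inequality against the distribution (1/2, 1/2) *)
pose proof (ln_le_sub1 (/ (2 * (1 - eta)))) as H1.
pose proof (ln_le_sub1 (/ (2 * eta))) as H2.
rewrite ln_Rinv, ln_mult in H1, H2 by lra.
specialize (H1 ltac:(apply Rinv_0_lt_compat; lra)).
specialize (H2 ltac:(apply Rinv_0_lt_compat; lra)).
assert (Hsum : (1 - eta) * (/ (2 * (1 - eta)) - 1) + eta * (/ (2 * eta) - 1) = 0)
  by (field; lra).
assert (Hgibbs : - ((1 - eta) * ln (1 - eta)) - eta * ln eta <= ln 2) by nra.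
pose proof ln2_pos. unfold log2.
apply Rmult_le_reg_r with (ln 2); [lra |].
replace ((- ((1 - eta) * (ln (1 - eta) / ln 2)) - eta * (ln eta / ln 2)) * ln 2)
  with (- ((1 - eta) * ln (1 - eta)) - eta * ln eta) by (field; lra).
lra.
Qed.

Lemma exists_nat_ceil x : 0 <= x -> exists K : nat, x <= INR K <= x + 1.
Proof.
intros Hx. destruct (archimed x) as [H1 H2].
assert (Hz : (0 <= up x)%Z) by (apply le_IZR; lra).
exists (Z.to_nat (up x)). rewrite INR_IZR_INZ, Z2Nat.id by exact Hz. lra.
Qed.

Lemma sumn_R_if n (A : nat -> bool) (G : R -> R) (p q : R) :
  sumn_R n (fun x => G (if A x then p else q))
  = INR (count_pred n A) * G p + (INR n - INR (count_pred n A)) * G q.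
Proof.
unfold count_pred. induction n as [|n IH]; cbn [sumn_R sum_pred].
- simpl. ring.
- rewrite IH, plus_INR, S_INR. destruct (A n); simpl; ring.
Qed.

Lemma sumn_R_if_ge n (A : nat -> bool) (h : nat -> nat) (p q : R) : 0 <= p -> 0 <= q ->
  p * INR (sum_pred n A h) <= sumn_R n (fun x => (if A x then p else q) * INR (h x)).
Proof.
intros Hp Hq. induction n as [|n IH]; cbn [sumn_R sum_pred].
- simpl. lra.
- rewrite plus_INR. pose proof (pos_INR (h n)). destruct (A n); simpl; nra.
Qed.

Lemma correct_client_injective (p : protocol) n P :
  correct p -> is_distr n P -> (forall x, (x < n)%nat -> 0 < P x) ->
  forall x y, (x < n)%nat -> (y < n)%nat ->
  client p n (server p n P) x = client p n (server p n P) y -> x = y.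
Proof.
intros Hp HP Hpos x y Hx Hy Exy.
rewrite <- (Hp n P HP x Hx (Hpos x Hx)), <- (Hp n P HP y Hy (Hpos y Hy)).
now rewrite Exy.
Qed.

Lemma log2_count_bound (n a L e : nat) : (1 <= a)%nat -> (2 * a <= n)%nat ->
  (Nat.pow (n - a) a <= Nat.pow 2 e * Nat.pow (2 * L + 1) a)%nat ->
  log2 (INR n) - 1 <= INR e / INR a + log2 (2 * INR L + 1).
Proof.
intros Ha Han Hcount.
assert (Ha_R : 1 <= INR a) by (apply (le_INR 1); exact Ha).
assert (Han_R : 2 * INR a <= INR n)
  by (replace 2 with (INR 2) by reflexivity; rewrite <- mult_INR; apply le_INR; exact Han).
pose proof (pos_INR L).
apply le_INR in Hcount.
rewrite mult_INR, !pow_INR, minus_INR, plus_INR, mult_INR in Hcount by lia.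
replace (INR 2) with 2 in Hcount by (simpl; ring).
replace (INR 1) with 1 in Hcount by reflexivity.
apply log2_le in Hcount; [| apply pow_lt; lra].
rewrite log2_mult, !log2_pow, log2_2 in Hcount by (try apply pow_lt; lra).
assert (Hhalf : log2 (INR n) - 1 <= log2 (INR n - INR a)).
{ rewrite <- log2_2, <- log2_div by lra. apply log2_le; lra. }
apply Rmult_le_reg_l with (INR a); [lra |].
replace (INR a * (INR e / INR a + log2 (2 * INR L + 1)))
  with (INR e + INR a * log2 (2 * INR L + 1)) by (field; lra).
nra.
Qed.

Definition hard_distr (n a : nat) (eta : R) (A : nat -> bool) (x : nat) : R :=
  if A x then (1 - eta) / INR a else eta / (INR n - INR a).

Section HardDistr.

Variables (n a : nat) (eta : R) (A : nat -> bool).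
Hypotheses (eta_bounds : 0 < eta < 1) (a_pos : (1 <= a)%nat) (a_lt_n : (a < n)%nat).
Hypothesis count_A : count_pred n A = a.

Let a_R : 1 <= INR a.
Proof. apply (le_INR 1). exact a_pos. Qed.

Let a_lt_n_R : INR a < INR n.
Proof. apply lt_INR. exact a_lt_n. Qed.

Lemma hard_distr_pos x : 0 < hard_distr n a eta A x.
Proof. unfold hard_distr. destruct (A x); apply Rdiv_lt_0_compat; lra. Qed.

Lemma hard_distr_is_distr : is_distr n (hard_distr n a eta A).
Proof.
split.
- intros x _. left. apply hard_distr_pos.
- unfold hard_distr. rewrite (sumn_R_if n A (fun y => y)), count_A. field. lra.
Qed.

Lemma entropy_hard_distr_le :
  entropy n (hard_distr n a eta A) <= log2 (INR a) + eta * log2 (INR n) + 1.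
Proof.
unfold entropy, hard_distr.
rewrite (sumn_R_if n A (fun y => if Req_EM_T y 0 then 0 else y * log2 y)), count_A.
destruct (Req_EM_T ((1 - eta) / INR a) 0) as [E|_];
  [pose proof (Rdiv_lt_0_compat (1 - eta) (INR a)); lra |].
destruct (Req_EM_T (eta / (INR n - INR a)) 0) as [E|_];
  [pose proof (Rdiv_lt_0_compat eta (INR n - INR a)); lra |].
rewrite !log2_div by lra.
assert (log2 (INR n - INR a) <= log2 (INR n)) by (apply log2_le; lra).
assert (0 <= log2 (INR a)) by (rewrite <- log2_1; apply log2_le; lra).
pose proof (binary_entropy_le1 eta eta_bounds).
replace (INR a * ((1 - eta) / INR a * (log2 (1 - eta) - log2 (INR a)))
         + (INR n - INR a) * (eta / (INR n - INR a) * (log2 eta - log2 (INR n - INR a))))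
  with ((1 - eta) * (log2 (1 - eta) - log2 (INR a))
        + eta * (log2 eta - log2 (INR n - INR a)))
  by (field; lra).
nra.
Qed.

Lemma client_bits_hard_distr_le (p : protocol) (kR d g : R) :
  0 <= kR -> 0 <= d ->
  (forall P, is_distr n P -> client_expected_bits p n P <= kR * entropy n P + g) ->
  g <= d * ln (INR n) ->
  client_expected_bits p n (hard_distr n a eta A)
  <= kR * (log2 (INR a) + eta * log2 (INR n) + 1) + d * log2 (INR n).
Proof.
intros Hk Hd Hcl Hg.
eapply Rle_trans; [apply Hcl, hard_distr_is_distr |].
pose proof (Rmult_le_compat_l kR _ _ Hk entropy_hard_distr_le).
pose proof (Rmult_le_compat_l d _ _ Hd (ln_le_log2 (INR n) ltac:(lra))).
lra.
Qed.

End HardDistr.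

Lemma protocol_hard_bound (p : protocol) (n a L : nat) (eta m b : R) :
  correct p -> 0 < eta < 1 -> (1 <= a)%nat -> (2 * a <= n)%nat -> (n <= 2 ^ L)%nat ->
  0 <= m -> 0 <= b ->
  (forall A, count_pred n A = a ->
     INR (length (server p n (hard_distr n a eta A))) <= m) ->
  (forall A, count_pred n A = a ->
     client_expected_bits p n (hard_distr n a eta A) <= b) ->
  log2 (INR n) - 1 <= b / (1 - eta) + (m + 3) / INR a + log2 (2 * INR L + 1).
Proof.
intros Hp Heta Ha Han HnL Hm Hb Hsrv Hcl.
assert (Ha_R : 1 <= INR a) by (apply (le_INR 1); exact Ha).
assert (Ha_n : (a < n)%nat) by lia.
assert (Han_R : INR a < INR n) by (apply lt_INR; exact Ha_n).
set (pA := (1 - eta) / INR a).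
assert (HpA : 0 < pA) by (apply Rdiv_lt_0_compat; lra).
destruct (exists_nat_ceil (b / pA)) as [K HK].
{ apply Rmult_le_pos; [lra | left; apply Rinv_0_lt_compat, HpA]. }
destruct (exists_nat_ceil m Hm) as [M HM].
assert (Hcount : (Nat.pow (n - a) a <= Nat.pow 2 (K + S M) * Nat.pow (2 * L + 1) a)%nat).
{ apply (InjectiveCodes.subset_codes_bound n a L M K
           (fun A => server p n (hard_distr n a eta A)) (client p n)).
  - exact HnL.
  - intros A HA. apply INR_le. specialize (Hsrv A HA). lra.
  - intros A HA. apply correct_client_injective;
      [exact Hp | apply hard_distr_is_distr | intros x _; apply hard_distr_pos]; assumption.
  - intros A HA. apply INR_le.
    apply Rle_trans with (b / pA); [| lra].
    apply Rmult_le_reg_l with pA; [exact HpA |].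
    replace (pA * (b / pA)) with b by (field; lra).
    eapply Rle_trans; [| apply (Hcl A HA)].
    apply sumn_R_if_ge; left; apply Rdiv_lt_0_compat; lra. }
pose proof (log2_count_bound n a L (K + S M) Ha Han Hcount) as H.
rewrite plus_INR, S_INR in H.
assert (Hdiv : (INR K + (INR M + 1)) / INR a <= b / (1 - eta) + (m + 3) / INR a).
{ apply Rmult_le_reg_l with (INR a); [lra |].
  replace (INR a * ((INR K + (INR M + 1)) / INR a)) with (INR K + (INR M + 1))
    by (field; lra).
  replace (INR a * (b / (1 - eta) + (m + 3) / INR a)) with (b / pA + (m + 3))
    by (unfold pA; field; lra).
  lra. }
lra.
Qed.

Lemma Rpower_pow2_le (e1 e2 : nat) (x : R) :
  x * INR e1 <= INR e2 -> Rpower (INR (2 ^ e1)) x <= INR (2 ^ e2).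
Proof.
intros H. rewrite !INR_pow2, <- !Rpower_pow, Rpower_mult by lra.
apply Rle_Rpower; lra.
Qed.

Lemma Rmax0_mul_le c y z : 0 < y -> y <= z -> c * y <= Rmax c 0 * z.
Proof. intros Hy Hyz. pose proof (Rmax_l c 0). pose proof (Rmax_r c 0). nra. Qed.

Lemma scale_client_budget_le (kR rR vR : R) : 1 <= kR -> 1 <= rR -> 0 <= vR ->
  (kR * ((rR - 1) * vR + / (8 * kR * rR) * (kR * rR * vR) + 1)
     + / (8 * rR) * (kR * rR * vR)) / (1 - / (8 * kR * rR))
  <= kR * rR * vR - kR * vR / 2 + kR + 1.
Proof.
intros Hk Hr Hv.
set (eta := / (8 * kR * rR)).
assert (Heta : eta * (8 * kR * rR) = 1) by (unfold eta; field; nra).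
assert (Heta1 : 0 < eta <= / 8).
{ split; unfold eta; [apply Rinv_0_lt_compat | apply Rinv_le_contravar]; nra. }
replace (kR * ((rR - 1) * vR + eta * (kR * rR * vR) + 1) + / (8 * rR) * (kR * rR * vR))
  with (kR * rR * vR - 3 / 4 * (kR * vR) + kR) by (unfold eta; field; nra).
apply Rmult_le_reg_r with (1 - eta); [lra |].
unfold Rdiv. rewrite Rmult_assoc, Rinv_l, Rmult_1_r by lra.
assert (eta * (kR * rR * vR) = vR / 8) by nra.
assert (eta * kR <= / 8) by nra.
assert (0 <= eta * (kR * vR)) by (apply Rmult_le_pos; nra).
nra.
Qed.

Section Scale.

Variables (k r v : nat) (eps : R).
Hypotheses (k_pos : (1 <= k)%nat) (v_pos : (1 <= v)%nat) (r_eps : 1 <= INR r * eps).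

Let r_pos : (1 <= r)%nat.
Proof. destruct r; [simpl in r_eps; lra | lia]. Qed.

Let k_R : 1 <= INR k.
Proof. apply (le_INR 1). exact k_pos. Qed.

Let r_R : 1 <= INR r.
Proof. apply (le_INR 1). exact r_pos. Qed.

Let v_R : 1 <= INR v.
Proof. apply (le_INR 1). exact v_pos. Qed.

Let E1_R : INR (k * r * v) = INR k * INR r * INR v.
Proof. rewrite !mult_INR. reflexivity. Qed.

Let E2_R : INR ((r - 1) * v) = (INR r - 1) * INR v.
Proof. rewrite mult_INR, minus_INR by exact r_pos. reflexivity. Qed.

Lemma pow2_scale_sizes :
  (1 <= 2 ^ ((r - 1) * v))%nat /\ (2 * 2 ^ ((r - 1) * v) <= 2 ^ (k * r * v))%nat.
Proof.
split.
- apply (Nat.pow_le_mono_r 2 0); nia.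
- pose proof r_pos. apply (Nat.pow_le_mono_r 2 (S ((r - 1) * v))); nia.
Qed.

Lemma Rpower_scale_le :
  Rpower (INR (2 ^ (k * r * v))) (1 / INR k - eps) <= INR (2 ^ ((r - 1) * v)).
Proof.
apply Rpower_pow2_le. rewrite E1_R, E2_R.
replace ((1 / INR k - eps) * (INR k * INR r * INR v))
  with (INR r * INR v - INR r * eps * (INR k * INR v)) by (field; lra).
pose proof (Rmult_le_compat_r (INR k * INR v) 1 (INR r * eps) ltac:(nra) r_eps). nra.
Qed.

Lemma hard_scale_bound (p : protocol) (c g : R) :
  correct p ->
  (forall P, is_distr (2 ^ (k * r * v)) P ->
     INR (length (server p (2 ^ (k * r * v)) P))
     <= c * Rpower (INR (2 ^ (k * r * v))) (1 / INR k - eps)) ->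
  (forall P, is_distr (2 ^ (k * r * v)) P ->
     client_expected_bits p (2 ^ (k * r * v)) P
     <= INR k * entropy (2 ^ (k * r * v)) P + g) ->
  g <= / (8 * INR r) * ln (INR (2 ^ (k * r * v))) ->
  INR k * INR v / 2 <= INR k + Rmax c 0 + 5 + log2 (2 * INR (k * r * v) + 1).
Proof.
intros Hp Hsrv Hcl Hg.
destruct pow2_scale_sizes as [Ha Han].
set (E1 := (k * r * v)%nat) in *. set (E2 := ((r - 1) * v)%nat) in *.
assert (Ha_n : (2 ^ E2 < 2 ^ E1)%nat) by lia.
assert (Ha_R : 1 <= INR (2 ^ E2)) by (apply (le_INR 1); exact Ha).
set (eta := / (8 * INR k * INR r)).
assert (Heta : 0 < eta < 1).
{ split; [apply Rinv_0_lt_compat; nra |].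
  apply Rlt_le_trans with (/ 1); [apply Rinv_lt_contravar; nra | lra]. }
set (b := INR k * (INR E2 + eta * INR E1 + 1) + / (8 * INR r) * INR E1).
assert (Hb : 0 <= b).
{ assert (0 <= eta * INR E1) by (apply Rmult_le_pos; [lra | apply pos_INR]).
  assert (0 <= / (8 * INR r) * INR E1)
    by (apply Rmult_le_pos; [left; apply Rinv_0_lt_compat; lra | apply pos_INR]).
  pose proof (pos_INR E2). unfold b. nra. }
assert (Hbound : log2 (INR (2 ^ E1)) - 1
  <= b / (1 - eta) + (Rmax c 0 * INR (2 ^ E2) + 3) / INR (2 ^ E2) + log2 (2 * INR E1 + 1)).
{ apply (protocol_hard_bound p); try assumption.
  - apply le_n.
  - apply Rmult_le_pos; [apply Rmax_r | lra].
  - intros A HA. eapply Rle_trans; [apply Hsrv, hard_distr_is_distr; assumption |].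
    apply Rmax0_mul_le; [apply exp_pos | exact Rpower_scale_le].
  - intros A HA. unfold b. rewrite <- (log2_INR_pow2 E1), <- (log2_INR_pow2 E2).
    apply (client_bits_hard_distr_le _ _ _ _ Heta Ha Ha_n HA p _ _ g); try assumption; [lra |].
    left. apply Rinv_0_lt_compat. lra. }
replace ((Rmax c 0 * INR (2 ^ E2) + 3) / INR (2 ^ E2)) with (Rmax c 0 + 3 / INR (2 ^ E2))
  in Hbound by (field; lra).
assert (3 / INR (2 ^ E2) <= 3).
{ unfold Rdiv. rewrite <- (Rmult_1_r 3) at 2. apply Rmult_le_compat_l; [lra |].
  rewrite <- Rinv_1. apply Rinv_le_contravar; lra. }
pose proof (scale_client_budget_le (INR k) (INR r) (INR v) k_R r_R ltac:(lra)).
unfold b, eta in Hbound. rewrite log2_INR_pow2, E1_R, E2_R in Hbound. rewrite E1_R.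
lra.
Qed.

End Scale.

Lemma quadratic_beats_log2 (alpha beta gamma : R) : 0 < alpha -> 0 <= gamma ->
  exists w0 : nat, forall w : nat, (w0 <= w)%nat ->
    beta + log2 (gamma * INR (w * w) + 1) < alpha * INR (w * w).
Proof.
intros Halpha Hgamma.
set (C := Rabs beta + 2 * (gamma + 1) + 4).
destruct (INR_unbounded (C / alpha)) as [w0 Hw0].
exists (S w0). intros w Hw. rewrite mult_INR.
assert (Hw1 : 1 <= INR w) by (apply (le_INR 1); lia).
assert (Hw0w : INR w0 <= INR w) by (apply le_INR; lia).
assert (Hlog : log2 (gamma * (INR w * INR w) + 1) <= 2 * (gamma + 1) + 4 * INR w).
{ apply Rle_trans with (log2 ((gamma + 1) * INR w * INR w)); [apply log2_le; nra |].
  rewrite !log2_mult by nra.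
  pose proof (log2_le_twice (gamma + 1)). pose proof (log2_le_twice (INR w)). lra. }
assert (HC : C < alpha * INR w).
{ apply Rlt_le_trans with (alpha * INR w0); [| apply Rmult_le_compat_l; lra].
  replace C with (alpha * (C / alpha)) at 1 by (field; lra).
  apply Rmult_lt_compat_l; lra. }
assert (C * INR w <= alpha * INR w * INR w) by (apply Rmult_le_compat_r; lra).
assert (0 <= (Rabs beta + 2 * (gamma + 1)) * (INR w - 1))
  by (apply Rmult_le_pos; [pose proof (Rabs_pos beta) |]; lra).
pose proof (Rle_abs beta). unfold C in *. nra.
Qed.

Lemma exists_nat_mul_ge1 eps : 0 < eps -> exists r : nat, (1 <= r)%nat /\ 1 <= INR r * eps.
Proof.
intros Heps. destruct (INR_unbounded (/ eps)) as [r Hr].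
assert (Hr_eps : 1 <= INR r * eps).
{ apply Rmult_gt_compat_r with (r := eps) in Hr; [| exact Heps].
  rewrite Rinv_l in Hr by lra. lra. }
exists r. split; [destruct r; [simpl in Hr_eps; lra | lia] | exact Hr_eps].
Qed.

Lemma le_pow2_scale (k r w : nat) : (1 <= k)%nat -> (1 <= r)%nat ->
  (w <= 2 ^ (k * r * (w * w)))%nat.
Proof.
intros Hk Hr.
assert (w <= k * r * (w * w))%nat by (destruct w; nia).
pose proof (Nat.pow_gt_lin_r 2 (k * r * (w * w)) ltac:(lia)). lia.
Qed.

Theorem theorem2 (k : nat) (eps : R) :
  (1 <= k)%nat -> 0 < eps ->
  ~ exists p : protocol,
      correct p /\
      (exists (c : R) (N : nat), forall n P, (N <= n)%nat -> is_distr n P ->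
          INR (length (server p n P)) <= c * Rpower (INR n) (1 / INR k - eps)) /\
      (exists g : nat -> R, little_o_log g /\
          forall n P, is_distr n P ->
            client_expected_bits p n P <= INR k * entropy n P + g n).
Proof.
intros Hk Heps [p [Hp [[c [N Hsrv]] [g [Hg Hcl]]]]].
assert (Hk_R : 1 <= INR k) by (apply (le_INR 1); exact Hk).
destruct (exists_nat_mul_ge1 eps Heps) as [r [Hr Hr_eps]].
pose proof (pos_INR r).
destruct (Hg (/ (8 * INR r))) as [Nd HNd]; [apply Rinv_0_lt_compat; nra |].
destruct (quadratic_beats_log2 (INR k / 2) (INR k + Rmax c 0 + 5) (2 * INR (k * r)))
  as [w0 Hw0]; [lra | pose proof (pos_INR (k * r)); lra |].
set (w := (w0 + N + Nd + 1)%nat).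
set (n := (2 ^ (k * r * (w * w)))%nat).
assert (Hn : (N <= n)%nat /\ (Nd <= n)%nat)
  by (pose proof (le_pow2_scale k r w Hk Hr); unfold n, w in *; lia).
pose proof (Hw0 w ltac:(unfold w; lia)) as Hbeats.
pose proof (hard_scale_bound k r (w * w) eps Hk ltac:(unfold w; nia) Hr_eps p c (g n) Hp
  (fun P => Hsrv n P (proj1 Hn)) (fun P => Hcl n P)) as Hscale.
replace (2 * INR (k * r) * INR (w * w)) with (2 * INR (k * r * (w * w))) in Hbeats
  by (rewrite !mult_INR; ring).
pose proof (HNd n (proj2 Hn)). pose proof (Rle_abs (g n)).
enough (INR k * INR (w * w) / 2 <= INR k + Rmax c 0 + 5 + log2 (2 * INR (k * r * (w * w)) + 1))
  by lra.
apply Hscale. fold n. lra.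
Qed.
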